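(* Let $t$ and $m$ be positive integers. Then, as formal power series in $q$, \[ \sum_{n=0}^{\infty}p_{mt,t}(n)q^{n}= \frac{1}{(q;q)_{\infty}}\sum_{n=0}^{\infty}(-1)^{n} q^{\frac{1}{2}(mn^{2}-(m-2)n)t}. \]
   Context: A partition $\lambda$ of a non-negative integer $n$ is a non-increasing sequence of positive integers (its parts) summing to $n$ (the empty partition is the unique partition of $0$). For positive integers $A$ and $a$, $\mathrm{mex}_{A,a}(\lambda)$ denotes the smallest positive integer congruent to $a$ modulo $A$ that is not a part of $\lambda$. Then $p_{A,a}(n)$ denotes the number of partitions $\lambda$ of $n$ satisfying $\mathrm{mex}_{A,a}(\lambda)\equiv a \pmod{2A}$. Also $(a;q)_\infty:=\prod_{j=0}^{\infty}(1-aq^j)$. *)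

From mathcomp Require Import all_boot all_order all_algebra.
Set Implicit Arguments. Unset Strict Implicit. Unset Printing Implicit Defensive.
Import GRing.Theory Num.Theory.

Definition is_partition (n : nat) (l : seq nat) : bool :=
  [&& sorted geq l, all (fun x => 0 < x) l & sumn l == n].

Fixpoint all_seqs (k n : nat) : seq (seq nat) :=
  match k with
  | 0 => [:: [::]]
  | k'.+1 => [seq x :: s | x <- iota 1 n, s <- all_seqs k' n]
  end.

(* a finite list of candidates containing every partition of n
   (a partition of n has at most n parts, each at most n) *)
Definition candidates (n : nat) : seq (seq nat) :=
  undup (flatten [seq all_seqs k n | k <- iota 0 n.+1]).

Definition mex_pred (A a : nat) (l : seq nat) : pred nat :=
  fun k => [&& 0 < k, k == a %[mod A] & k \notin l].

Lemma mex_ex (A a : nat) (l : seq nat) : 0 < A -> exists k, mex_pred A a l k.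
Proof.
move=> A0; exists (a + A * (sumn l).+1).
have Hle : forall x, x \in l -> x <= sumn l.
  elim: l => //= y l IH x; rewrite inE => /orP [/eqP -> | /IH H];
    [exact: leq_addr | exact: leq_trans H (leq_addl _ _)].
apply/and3P; split.
- by rewrite ltn_addl // muln_gt0 A0.
- by rewrite addnC mulnC modnMDl.
- apply/negP => /Hle H.
  have : sumn l < a + A * (sumn l).+1.
    apply: leq_trans (leq_addl _ _); rewrite -[X in X <= _]mul1n.
    exact: leq_mul.
  by rewrite ltnNge H.
Qed.

(* smallest positive integer congruent to a mod A that is not a part of l
   (only meaningful for A > 0; set to 0 otherwise) *)
Definition mex (A a : nat) (l : seq nat) : nat :=
  (if 0 < A as b return (0 < A = b -> nat)
   then fun h => ex_minn (mex_ex a l h)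
   else fun _ => 0) erefl.

Definition p_mex (A a n : nat) : nat :=
  count (fun l => is_partition n l && (mex A a l == a %[mod 2 * A])) (candidates n).

Local Open Scope ring_scope.

Definition fps := nat -> int.

Definition fps_mul (f g : fps) : fps :=
  fun N => \sum_(i < N.+1) f i * g (N - i)%N.

Definition fps_one : fps := fun N => (N == 0)%:R.

(* (q;q)_oo = prod_{j>=1} (1 - q^j): its N-th coefficient is that of the
   finite product prod_{j=1}^{N} (1 - q^j), as the other factors are 1 + O(q^{N+1}). *)
Definition qq_inf : fps :=
  fun N => (\prod_(1 <= j < N.+1) (1 - 'X^j : {poly int}))`_N.

Definition p_mex_gf (A a : nat) : fps := fun N => (p_mex A a N)%:R.

(* exponent (1/2)(m n^2 - (m-2) n) t  =  t * (m * n(n-1)/2 + n) *)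
Definition expo (m t n : nat) : nat := (t * (m * (n * n.-1 %/ 2) + n))%N.

(* sum_{n>=0} (-1)^n q^{expo m t n}; since expo m t n >= n for t, m >= 1,
   only n <= N can contribute to the coefficient of q^N. *)
Definition theta_series (m t : nat) : fps :=
  fun N => \sum_(n < N.+1 | expo m t n == N) (-1) ^+ n.

(* Write a_j := t + j m t, so that a_0 < a_1 < ... are the positive integers
   congruent to t modulo mt.  If a_0, ..., a_(J-1) are parts of a partition and
   a_J is not, its mex is a_J, and the mex condition says that J is even, i.e.
   that sum_(j <= J) (-1)^j = 1.  Summing over the partitions of N and exchanging
   the sums, p_(mt,t)(N) is the alternating sum over j of the number of
   partitions of N having a_0, ..., a_(j-1) among their parts.  Removing these
   distinct parts shows that this number is p(N - e_j), where
   e_j = a_0 + ... + a_(j-1) = t (m j (j-1)/2 + j).  Hence p_(mt,t)(N) is the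
   coefficient of q^N in P(q) sum_j (-1)^j q^(e_j), where P(q) = sum_n p(n) q^n
   is 1/(q;q)_oo by Euler's identity; the latter follows from the recursion
   p_(<=k)(n) = p_(<=k-1)(n) + p_(<=k)(n-k) for partitions into parts at most k. *)

From mathcomp Require Import all_boot all_order all_algebra.
From mathcomp Require Import zify ring.
Set Implicit Arguments. Unset Strict Implicit. Unset Printing Implicit Defensive.
Import GRing.Theory.

Lemma mem_leq_sumn (s : seq nat) x : x \in s -> x <= sumn s.
Proof. by move=> /perm_to_rem/perm_sumn ->; apply: leq_addr. Qed.

Lemma size_leq_sumn (s : seq nat) : all (fun x => 0 < x) s -> size s <= sumn s.
Proof. by elim: s => //= x s IH /andP[x_gt0 /IH]; lia. Qed.

Lemma all_seqs_complete n (s : seq nat) :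
  all (fun x => 0 < x <= n) s -> s \in all_seqs (size s) n.
Proof.
elim: s => [|x s IH] /=; first by rewrite inE.
case/andP=> x_bnd s_bnd; apply/allpairsP; exists (x, s); split=> //=; last exact: IH.
by rewrite mem_iota; lia.
Qed.

Lemma partition_in_candidates n l : is_partition n l -> l \in candidates n.
Proof.
case/and3P=> _ l_pos /eqP l_sum; rewrite mem_undup; apply/flattenP.
exists (all_seqs (size l) n).
  by apply/mapP; exists (size l); rewrite // mem_iota ltnS -l_sum size_leq_sumn.
apply: all_seqs_complete; apply/allP=> x x_l.
by rewrite (allP l_pos) //= -l_sum mem_leq_sumn.
Qed.

Definition partitions n := filter (is_partition n) (candidates n).

Lemma mem_partitions n l : (l \in partitions n) = is_partition n l.
Proof. by rewrite mem_filter andb_idr // => /partition_in_candidates. Qed.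

Lemma uniq_partitions n : uniq (partitions n).
Proof. by rewrite filter_uniq ?undup_uniq. Qed.

Lemma mem_filter_partitions n (P : pred (seq nat)) l :
  (l \in filter P (partitions n)) = P l && is_partition n l.
Proof. by rewrite mem_filter mem_partitions. Qed.

Lemma eq_count_partitions n (Q1 Q2 : pred (seq nat)) :
  {in is_partition n, Q1 =1 Q2} -> count Q1 (partitions n) = count Q2 (partitions n).
Proof. by move=> eqQ; apply: eq_in_count => l; rewrite mem_partitions; apply: eqQ. Qed.

Lemma partition_part_leq n (l : seq nat) x : is_partition n l -> x \in l -> x <= n.
Proof. by case/and3P=> _ _ /eqP <-; apply: mem_leq_sumn. Qed.

Lemma geq_total : total geq. Proof. by move=> x y; apply: leq_total. Qed.
Lemma geq_trans : transitive geq. Proof. by move=> y x z /= ? ?; apply: (@leq_trans y). Qed.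
Lemma geq_anti : antisymmetric geq.
Proof. by move=> x y /andP[? ?]; apply/eqP; rewrite eqn_leq; apply/andP. Qed.

Definition add_part (x : nat) (l : seq nat) := sort geq (x :: l).

Lemma perm_add_part x (l : seq nat) : perm_eq (add_part x l) (x :: l).
Proof. exact: permEl (perm_sort _ _). Qed.

Lemma mem_add_part x (l : seq nat) y : (y \in add_part x l) = (y == x) || (y \in l).
Proof. by rewrite mem_sort inE. Qed.

Lemma add_part_partition n x (l : seq nat) :
  0 < x -> is_partition n l -> is_partition (n + x) (add_part x l).
Proof.
move=> x_gt0 /and3P[_ l_pos /eqP l_sum]; apply/and3P; split.
- exact: (sort_sorted geq_total _).
- by rewrite (perm_all _ (perm_add_part x l)) /= x_gt0.
- by rewrite (perm_sumn (perm_add_part x l)) /= l_sum addnC.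
Qed.

Lemma rem_partition n x (l : seq nat) :
  x \in l -> is_partition n l -> is_partition (n - x) (rem x l).
Proof.
move=> x_l /and3P[l_sorted l_pos /eqP l_sum]; have l_perm := perm_to_rem x_l.
apply/and3P; split.
- exact: (subseq_sorted geq_trans (rem_subseq x l) l_sorted).
- by move: l_pos; rewrite (perm_all _ l_perm) => /andP[].
- by rewrite -l_sum (perm_sumn l_perm) addKn.
Qed.

Lemma add_part_rem x (l : seq nat) : sorted geq l -> x \in l -> add_part x (rem x l) = l.
Proof.
move=> l_sorted x_l; apply: (sorted_eq geq_trans geq_anti) => //.
  exact: (sort_sorted geq_total _).
by rewrite (permPl (perm_add_part _ _)) perm_sym perm_to_rem.
Qed.

Lemma rem_add_part x (l : seq nat) : sorted geq l -> rem x (add_part x l) = l.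
Proof.
move=> l_sorted; apply: (sorted_eq geq_trans geq_anti) => //.
  exact: (subseq_sorted geq_trans (rem_subseq _ _) (sort_sorted geq_total _)).
rewrite -(perm_cons x) -(permPr (perm_add_part x l)) perm_sym perm_to_rem //.
by rewrite mem_add_part eqxx.
Qed.

Lemma count_partitions_mem n x (Q : pred (seq nat)) : 0 < x <= n ->
  count (fun l => (x \in l) && Q l) (partitions n)
  = count (fun l => Q (add_part x l)) (partitions (n - x)).
Proof.
case/andP=> x_gt0 x_le_n; rewrite -!size_filter -(size_map (add_part x)).
apply/perm_size/uniq_perm; first exact/filter_uniq/uniq_partitions.
  rewrite map_inj_in_uniq; first exact/filter_uniq/uniq_partitions.
  move=> l1 l2; rewrite !mem_filter_partitions.
  move=> /andP[_ /and3P[l1_sorted _ _]] /andP[_ /and3P[l2_sorted _ _]] eq12.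
  by rewrite -(rem_add_part x l1_sorted) eq12 rem_add_part.
move=> l; apply/idP/mapP => [|[l' + ->]].
  rewrite mem_filter_partitions => /andP[/andP[x_l Ql] l_part].
  have l_sorted : sorted geq l by case/and3P: l_part.
  exists (rem x l); last by rewrite add_part_rem.
  by rewrite mem_filter_partitions add_part_rem ?Ql ?rem_partition.
rewrite !mem_filter_partitions mem_add_part eqxx => /andP[-> l'_part] /=.
by rewrite -(subnK x_le_n) add_part_partition.
Qed.

Lemma count_partitions_mem_gt n x (Q : pred (seq nat)) :
  n < x -> count (fun l => (x \in l) && Q l) (partitions n) = 0.
Proof.
move=> n_lt_x; apply/eqP; rewrite -leqn0 leqNgt -has_count; apply/hasP => -[l].
rewrite mem_partitions => l_part /andP[/(partition_part_leq l_part)].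
by rewrite leqNgt n_lt_x.
Qed.

Lemma count_partitions_contain n (s : seq nat) :
  uniq s -> all (fun x => 0 < x) s ->
  count (fun l => all (mem l) s) (partitions n)
  = if sumn s <= n then size (partitions (n - sumn s)) else 0.
Proof.
elim: s n => [|x s IH] n /=; first by rewrite count_predT subn0.
case/andP=> x_notin_s s_uniq /andP[x_gt0 s_pos].
have [x_le_n | n_lt_x] := leqP x n; last first.
  by rewrite count_partitions_mem_gt // leqNgt (leq_trans n_lt_x) ?leq_addr.
rewrite count_partitions_mem ?x_gt0 //.
rewrite (eq_count (a2 := fun l => all (mem l) s)); last first.
  move=> l; apply: eq_in_all => y y_s /=; rewrite mem_add_part.
  by case: eqP y_s => // ->; rewrite (negbTE x_notin_s).
by rewrite IH // -leq_subRL // subnDA.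
Qed.

Definition npart_le k n := count (all (fun y => y <= k)) (partitions n).

Lemma npart_le_large k n : n <= k -> npart_le k n = size (partitions n).
Proof.
move=> n_le_k; rewrite -count_predT; apply: eq_count_partitions => l l_part.
by apply/allP=> y /(partition_part_leq l_part)/leq_trans; apply.
Qed.

Lemma npart_le0 n : npart_le 0 n = (n == 0).
Proof.
rewrite /npart_le (@eq_count_partitions _ _ (pred1 [::])); last first.
  by move=> [|y l] // /and3P[_ /= /andP[y_gt0 _] _]; rewrite leqNgt y_gt0.
by rewrite count_uniq_mem ?uniq_partitions // mem_partitions /is_partition eq_sym; case: n.
Qed.

Lemma npart_leS k n : npart_le k.+1 n
  = npart_le k n + (if k.+1 <= n then npart_le k.+1 (n - k.+1) else 0).
Proof.
rewrite /npart_le -size_filter -(count_predC (fun l : seq nat => k.+1 \in l)).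
rewrite !(count_filter _ _ (partitions n)) addnC.
congr (_ + _).
  apply: eq_count => l /=; rewrite andbC; apply/andP/allP => [[le_k1 k1_l] y y_l | le_k].
    by rewrite -ltnS ltn_neqAle (allP le_k1) // andbT; apply: contraNneq k1_l => <-.
  by split; [apply/allP=> y /le_k/leqW | apply/negP=> /le_k; rewrite ltnn].
set le_k1 := all _; case: (leqP k.+1 n) => [k1_le_n | n_lt_k1].
  rewrite (@count_partitions_mem _ _ le_k1) //; apply: eq_count => l.
  by rewrite /le_k1 (perm_all _ (perm_add_part _ _)) /= leqnn.
exact: (@count_partitions_mem_gt _ _ le_k1).
Qed.

Lemma mexE A a l (A_gt0 : 0 < A) : mex A a l = ex_minn (mex_ex a l A_gt0).
Proof.
have mex_if (b : bool) (e : (0 < A) = b) :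
    (if b as b' return ((0 < A) = b' -> nat)
     then fun h => ex_minn (mex_ex a l h) else fun _ => 0) e = ex_minn (mex_ex a l A_gt0).
  by case: b e => e; [rewrite (bool_irrelevance e A_gt0) | rewrite A_gt0 in e].
exact: mex_if.
Qed.

Section Mex.
Variables A a : nat.
Hypotheses (a_gt0 : 0 < a) (a_le_A : a <= A).

Lemma eq_mod_class k : 0 < k -> k = a %[mod A] -> exists i, k = a + i * A.
Proof.
move=> k_gt0 k_mod; have a_le_k : a <= k.
  rewrite leqNgt; apply/negP => k_lt_a.
  move: k_mod; rewrite (modn_small (leq_trans k_lt_a a_le_A)).
  move: a_le_A; rewrite leq_eqVlt => /predU1P[->|a_lt_A]; first by rewrite modnn; lia.
  by rewrite modn_small //; lia.
move/eqP: k_mod; rewrite eqn_mod_dvd // => /dvdnP[i k_a].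
by exists i; rewrite -k_a subnKC.
Qed.

Let A_gt0 : 0 < A := leq_trans a_gt0 a_le_A.

Definition class_prefix j := [seq a + i * A | i <- iota 0 j].

Lemma uniq_class_prefix j : uniq (class_prefix j).
Proof.
rewrite map_inj_uniq ?iota_uniq // => i i' /addnI/eqP.
by rewrite eqn_pmul2r // => /eqP.
Qed.

Lemma class_prefix_pos j : all (fun x => 0 < x) (class_prefix j).
Proof. by apply/allP=> _ /mapP[i _ ->]; apply: ltn_addr. Qed.

Lemma sumn_class_prefix j : sumn (class_prefix j) = j * a + 'C(j, 2) * A.
Proof.
rewrite sumnE big_map (_ : iota 0 j = index_iota 0 j); last by rewrite /index_iota subn0.
by rewrite big_split sum_nat_const_nat -big_distrl bin2_sum subn0.
Qed.

Lemma mex_class l : exists2 J, mex A a l = a + J * A &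
  forall j, all (mem l) (class_prefix j) = (j <= J).
Proof.
rewrite (mexE _ _ A_gt0); case: ex_minnP => k /and3P[k_gt0 /eqP k_mod k_notin_l] k_min.
have [J k_def] := eq_mod_class k_gt0 k_mod; subst k; exists J => // j.
apply/allP/idP => [prefix_l | j_le_J y /mapP[i]].
  rewrite leqNgt; apply: contra k_notin_l => J_lt_j; apply: prefix_l.
  by apply: map_f; rewrite mem_iota.
rewrite mem_iota add0n => /andP[_ i_lt_j] ->; apply: contraT => i_notin_l.
have /k_min : mex_pred A a l (a + i * A).
  by apply/and3P; split; [apply: ltn_addr | rewrite addnC modnMDl | ].
by rewrite leq_add2l leq_pmul2r // leqNgt (leq_trans i_lt_j j_le_J).
Qed.

End Mex.

Lemma expo_ge m t n : 0 < t -> n <= expo m t n.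
Proof. by move=> t_gt0; apply: leq_trans (leq_addl _ n) (leq_pmull _ t_gt0). Qed.

Lemma sumn_class_prefix_expo m t j : sumn (class_prefix (m * t) t j) = expo m t j.
Proof. by rewrite sumn_class_prefix bin2 -divn2 /expo; set c := j * j.-1 %/ 2; ring. Qed.

Local Open Scope ring_scope.

Lemma coefM_eq_upto (R : nzSemiRingType) (p p' r : {poly R}) n :
  (forall i, (i <= n)%N -> p`_i = p'`_i) -> (p * r)`_n = (p' * r)`_n.
Proof. by move=> eq_pp'; rewrite !coefM; apply: eq_bigr => i _; rewrite eq_pp' // -ltnS. Qed.

Definition euler_prod k : {poly int} := \prod_(1 <= j < k.+1) (1 - 'X^j).

Lemma euler_prodS k : euler_prod k.+1 = euler_prod k * (1 - 'X^(k.+1)).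
Proof. exact: big_nat_recr. Qed.

Lemma coef_euler_prod_stable k j : (j <= k)%N -> (euler_prod k)`_j = (euler_prod j)`_j.
Proof.
elim: k => [|k IH]; first by rewrite leqn0 => /eqP ->.
rewrite leq_eqVlt => /predU1P[-> // | j_lt_k1].
by rewrite euler_prodS mulrBr mulr1 coefB coefMXn j_lt_k1 subr0 IH.
Qed.

Definition npart_le_poly k m : {poly int} := \poly_(i < m) (npart_le k i)%:R.

Lemma coef_npart_le_poly_mul_factor k m i : (i < m)%N ->
  (npart_le_poly k.+1 m * (1 - 'X^(k.+1)))`_i = (npart_le k i)%:R.
Proof.
move=> i_lt_m; rewrite mulrBr mulr1 coefB coefMXn !coef_poly i_lt_m npart_leS.
case: (ltnP i k.+1) => _; first by rewrite addn0 subr0.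
by rewrite (leq_ltn_trans (leq_subr _ _) i_lt_m) natrD addrK.
Qed.

Lemma coef_npart_le_poly_mul_euler_prod k m n : (n < m)%N ->
  (npart_le_poly k m * euler_prod k)`_n = (n == 0)%:R.
Proof.
elim: k n => [|k IH] n n_lt_m.
  by rewrite /euler_prod big_geq // mulr1 coef_poly n_lt_m npart_le0.
rewrite euler_prodS mulrCA mulrC -(IH n n_lt_m); apply: coefM_eq_upto => i i_le_n.
have i_lt_m := leq_ltn_trans i_le_n n_lt_m.
by rewrite coef_npart_le_poly_mul_factor // coef_poly i_lt_m.
Qed.

Definition partition_gf : fps := fun n => (size (partitions n))%:R.

Lemma partition_gf_mul_qq_inf n : fps_mul partition_gf qq_inf n = fps_one n.
Proof.
rewrite /fps_one -(@coef_npart_le_poly_mul_euler_prod n n.+1) // coefM.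
apply: eq_bigr => -[i /= i_lt_n1] _; rewrite /partition_gf /qq_inf.
rewrite coef_poly i_lt_n1 npart_le_large; last by rewrite -ltnS.
by rewrite (@coef_euler_prod_stable n) ?leq_subr.
Qed.

Lemma fps_mul_rcancel (f h g : fps) : g 0%N = 1 ->
  (forall n, fps_mul f g n = fps_mul h g n) -> forall n, f n = h n.
Proof.
move=> g0 eq_fgh; elim/ltn_ind=> n IH; have := eq_fgh n.
rewrite /fps_mul !big_ord_recr /= subnn g0 !mulr1.
rewrite (eq_bigr (fun i : 'I_n => h i * g (n - i)%N)); first exact: addrI.
by move=> i _; rewrite IH.
Qed.

Lemma fps_inv_qq_inf (F : fps) :
  (forall n, fps_mul F qq_inf n = fps_one n) -> forall n, F n = partition_gf n.
Proof.
move=> F_inv; apply: (@fps_mul_rcancel _ _ qq_inf) => [|n].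
  by rewrite /qq_inf big_geq // coef1.
by rewrite F_inv partition_gf_mul_qq_inf.
Qed.

(* Given [n <= e n], the series [fun M => ...] below is sum_n c n q^(e n). *)
Lemma fps_mul_sum_monomials (f : fps) (e : nat -> nat) (c : nat -> int) :
  (forall n, n <= e n)%N -> forall N,
  fps_mul f (fun M => \sum_(n < M.+1 | e n == M) c n) N
  = \sum_(n < N.+1 | (e n <= N)%N) c n * f (N - e n)%N.
Proof.
move=> e_ge N; rewrite /fps_mul.
transitivity (\sum_(i < N.+1) \sum_(n < N.+1 | e n == (N - i)%N) f i * c n).
  apply: eq_bigr => i _; have le_N1 : ((N - i).+1 <= N.+1)%N by rewrite ltnS leq_subr.
  rewrite mulr_sumr; apply: etrans (big_ord_widen_cond _ (fun n => e n == (N - i)%N)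
    (fun n => f i * c n) le_N1) _.
  by apply: eq_bigl => n; case: eqP => //= <-; rewrite ltnS e_ge.
rewrite (exchange_big_dep xpredT) //= [RHS]big_mkcond; apply: eq_bigr => n _.
case: leqP => [en_le_N | N_lt_en]; last first.
  by rewrite big_pred0 // => i; apply/negbTE/eqP; have := leq_subr i N; lia.
have N_en_lt : (N - e n < N.+1)%N by rewrite ltnS leq_subr.
rewrite (big_pred1 (inord (N - e n))) => [|i /=]; first by rewrite inordK // mulrC.
by rewrite -val_eqE /= inordK //; apply/eqP/eqP; have := ltn_ord i; lia.
Qed.

Lemma sum_sign_ord (R : pzRingType) J : \sum_(j < J.+1) (-1) ^+ j = (~~ odd J)%:R :> R.
Proof.
elim: J => [|J IH]; first by rewrite big_ord1.
rewrite big_ord_recr IH /= -signr_odd /=.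
by case: (odd J); rewrite ?add0r ?subrr.
Qed.

Lemma sum_sign_leq (R : pzRingType) K J : (J < K)%N ->
  \sum_(j < K) (-1) ^+ j * (j <= J)%:R = (~~ odd J)%:R :> R.
Proof.
move=> J_lt_K; rewrite -sum_sign_ord (big_ord_widen K (fun j => (-1) ^+ j) J_lt_K).
by rewrite [RHS]big_mkcond; apply: eq_bigr => j _; rewrite ltnS; case: leqP; rewrite ?mulr1 ?mulr0.
Qed.

Lemma natr_count (R : pzSemiRingType) (T : Type) (P : pred T) s :
  (count P s)%:R = \sum_(x <- s) (P x)%:R :> R.
Proof. by rewrite -sumn_count sumnE big_map natr_sum. Qed.

Lemma mex_cond_sign_sum A a l K : (0 < a)%N -> (a <= A)%N -> (sumn l < K)%N ->
  (mex A a l == a %[mod 2 * A])%:R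
  = \sum_(j < K) (-1) ^+ j * (all (mem l) (class_prefix A a j))%:R :> int.
Proof.
move=> a_gt0 a_le_A sumn_lt_K; have A_gt0 := leq_trans a_gt0 a_le_A.
have [J -> prefixE] := mex_class a_gt0 a_le_A l.
have J_le_sumn : (J <= sumn l)%N.
  case: J prefixE => // J prefixE; apply: (@leq_trans (a + J * A)%N).
    by rewrite -addn1 addnC leq_add ?leq_pmulr.
  apply: mem_leq_sumn; move/allP: (prefixE J.+1); rewrite leqnn; apply => //.
  by apply/mapP; exists J; rewrite // mem_iota add0n ltnSn.
under eq_bigr do rewrite prefixE.
rewrite sum_sign_leq ?(leq_ltn_trans J_le_sumn) // eqn_mod_dvd ?leq_addr // addKn.
by rewrite dvdn_pmul2r ?dvdn2.
Qed.

Lemma p_mex_sign_sum A a N : (0 < a)%N -> (a <= A)%N ->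
  (p_mex A a N)%:R = \sum_(j < N.+1)
    (-1) ^+ j * (count (fun l => all (mem l) (class_prefix A a j)) (partitions N))%:R :> int.
Proof.
move=> a_gt0 a_le_A.
have -> : p_mex A a N = count (fun l => mex A a l == a %[mod 2 * A]) (partitions N).
  by rewrite /p_mex /partitions count_filter; apply: eq_count => l; rewrite /= andbC.
rewrite natr_count (eq_big_seq (fun l : seq nat => \sum_(j < N.+1)
  (-1) ^+ j * (all (mem l) (class_prefix A a j))%:R)) => [|l].
  by rewrite exchange_big; apply: eq_bigr => j _; rewrite natr_count mulr_sumr.
by rewrite mem_partitions => /and3P[_ _ /eqP l_sum]; apply: mex_cond_sign_sum; rewrite ?l_sum.
Qed.

Theorem lemma2p1 (t m : nat) (ht : (0 < t)%N) (hm : (0 < m)%N)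
  (F : fps) (hF : forall N, fps_mul F qq_inf N = fps_one N) :
  forall N : nat, p_mex_gf (m * t) t N = fps_mul F (theta_series m t) N.
Proof.
move=> N; have t_le_mt : (t <= m * t)%N by rewrite leq_pmull.
rewrite /p_mex_gf p_mex_sign_sum // /theta_series fps_mul_sum_monomials => [|n]; last first.
  exact: expo_ge.
rewrite [RHS]big_mkcond; apply: eq_bigr => j _.
rewrite count_partitions_contain ?uniq_class_prefix ?class_prefix_pos //.
rewrite sumn_class_prefix_expo (fps_inv_qq_inf hF) /partition_gf.
by case: leqP; rewrite ?mulr0 // mulrC.
Qed.
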